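(* Let $\Delta_1\subseteq\Delta_2$ be reflexive $4$-polytopes in $N_\mathbb{R}$ and let $\Sigma_1$ be any projective $\Delta_1$-maximal fan. Then there exists a projective $\Delta_2$-maximal fan $\Sigma_2$ that refines $\Sigma_1$.
   Context: $N\cong\mathbb{Z}^4$ is a lattice with dual $M$. A lattice polytope $\Delta\subseteq N_\mathbb{R}$ with the origin in its interior is reflexive if $\Delta^*=\{m\in M_\mathbb{R}:\langle m,n\rangle\ge -1\ \forall n\in\Delta\}$ is a lattice polytope. For a reflexive polytope $\Delta$, a fan $\Sigma$ in $N_\mathbb{R}$ is $\Delta$-maximal if its set of rays equals the set of rays through the nonzero lattice points of $\Delta$ and $\Sigma$ is complete and simplicial; it is projective if its toric variety is projective (equivalently it admits a strictly convex piecewise-linear support function). $\Sigma_2$ refines $\Sigma_1$ means every cone of $\Sigma_2$ is contained in a cone of $\Sigma_1$. *)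

(* N = Z^4 is modelled by 'rV[int]_4, N_R (and M_R) by
   'rV[R]_4 for an arbitrary real field R. *)
From HB Require Import structures.
From mathcomp Require Import all_boot all_order all_algebra.
Unset Printing Implicit Defensive.
Import Order.TTheory GRing.Theory Num.Theory.
Local Open Scope ring_scope.

Section Toric.
Variable R : realFieldType.

Definition vec := 'rV[R]_4.
Definition lat := 'rV[int]_4.

Definition lat2vec (n : lat) : vec := map_mx (fun z : int => z%:~R) n.

Definition pairing (m u : vec) : R := \sum_(i < 4) m 0 i * u 0 i.

Definition seteq (A B : vec -> Prop) := forall x, A x <-> B x.
Definition vsubset (A B : vec -> Prop) := forall x, A x -> B x.

Definition conv (V : seq lat) (x : vec) : Prop :=
  exists c : 'I_(size V) -> R,
    (forall i, 0 <= c i) /\ \sum_i c i = 1 /\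
    x = \sum_i c i *: lat2vec (nth 0 V i).

Definition lattice_polytope (P : vec -> Prop) : Prop :=
  exists W : seq lat, seteq P (conv W).

Definition interior_pt (P : vec -> Prop) (x : vec) : Prop :=
  exists e : R, 0 < e /\ forall y : vec, (forall i, `|y 0 i - x 0 i| <= e) -> P y.

Definition dual (P : vec -> Prop) (m : vec) : Prop :=
  forall n, P n -> -1 <= pairing m n.

Definition reflexive_polytope (V : seq lat) : Prop :=
  interior_pt (conv V) 0 /\ lattice_polytope (dual (conv V)).

Definition cone (S : seq lat) (x : vec) : Prop :=
  exists c : 'I_(size S) -> R,
    (forall i, 0 <= c i) /\ x = \sum_i c i *: lat2vec (nth 0 S i).

Definition ray (v : vec) (x : vec) : Prop := exists t : R, 0 <= t /\ x = t *: v.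

Definition lin_indep (S : seq lat) : Prop :=
  forall c : 'I_(size S) -> R,
    \sum_i c i *: lat2vec (nth 0 S i) = 0 -> forall i, c i = 0.

Definition strongly_convex (C : vec -> Prop) : Prop :=
  forall x, C x -> C (- x) -> x = 0.

Definition is_face (tau sigma : vec -> Prop) : Prop :=
  exists m : vec, (forall u, sigma u -> 0 <= pairing m u) /\
    forall u, tau u <-> (sigma u /\ pairing m u = 0).

(* A fan is given by a finite list of cones, each given by generators. *)
Definition fanT := seq (seq lat).

Definition is_fan (F : fanT) : Prop :=
  [/\ forall S, S \in F -> strongly_convex (cone S),
      forall S tau, S \in F -> is_face tau (cone S) ->
        exists2 T, T \in F & seteq tau (cone T) &
      forall S T, S \in F -> T \in F ->
        is_face (fun x => cone S x /\ cone T x) (cone S) /\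
        is_face (fun x => cone S x /\ cone T x) (cone T)].

Definition complete (F : fanT) : Prop :=
  forall x : vec, exists2 S, S \in F & cone S x.

Definition simplicial (F : fanT) : Prop :=
  forall S, S \in F -> exists T, lin_indep T /\ seteq (cone S) (cone T).

Definition rays_are (F : fanT) (V : seq lat) : Prop :=
  (forall S (v : vec), S \in F -> v != 0 -> seteq (cone S) (ray v) ->
     exists n : lat, [/\ n != 0, conv V (lat2vec n) & seteq (cone S) (ray (lat2vec n))]) /\
  (forall n : lat, n != 0 -> conv V (lat2vec n) ->
     exists2 S, S \in F & seteq (cone S) (ray (lat2vec n))).

Definition delta_maximal (V : seq lat) (F : fanT) : Prop :=
  [/\ is_fan F, rays_are F V, complete F & simplicial F].

Definition maximal_cone (F : fanT) (S : seq lat) : Prop :=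
  S \in F /\ forall T, T \in F -> vsubset (cone S) (cone T) -> vsubset (cone T) (cone S).

(* F admits a strictly convex piecewise-linear support function
   (convention of Cox-Little-Schenck: phi = min of the m_sigma). *)
Definition projective (F : fanT) : Prop :=
  exists phi : vec -> R,
    (forall S, S \in F -> exists m : vec, forall u, cone S u -> phi u = pairing m u) /\
    (forall S, maximal_cone F S -> exists m : vec, forall u,
        phi u <= pairing m u /\ (phi u = pairing m u <-> cone S u)).

Definition refines (F2 F1 : fanT) : Prop :=
  forall S2, S2 \in F2 -> exists2 S1, S1 \in F1 & vsubset (cone S2) (cone S1).

End Toric.

From Pilot Require Import Defs.
From HB Require Import structures.
From mathcomp Require Import all_boot all_order all_algebra.
From Stdlib Require Import Classical ClassicalEpsilon.
From mathcomp Require Import zify.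

(* A projective simplicial fan is recorded by its maximal cones [s], each with
   the linear function [m_s] that the strictly convex support function
   [phi = min_s m_s] induces on it; coherence of this data says that
   [m_s <= m_t] on the generators of [s], with equality only on generators that
   lie in [t].  Rescaling the generators of the maximal cones of [Sigma_1] to
   lattice points of [Delta_1 \subseteq Delta_2] gives coherent data.  Then one
   performs, one after another, the stellar subdivision at every nonzero
   lattice point [v] of [Delta_2]: each cone [s] containing [v] is replaced by
   the cones obtained by swapping one generator for [v], and its linear
   function is raised by a small multiple of the dual coordinate of the swapped
   generator, which keeps the data coherent.  The faces of the final cones form
   the required fan [Sigma_2], projective with support function [min_s m_s]. *)

Set Implicit Arguments. Unset Strict Implicit. Unset Printing Implicit Defensive.
Import Order.TTheory GRing.Theory Num.Theory.
Local Open Scope ring_scope.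

Section Refinement.
Variable R : realFieldType.
Local Notation vec := (vec R).
Local Notation lv := (lat2vec R).
Local Notation pairing := (pairing R).
Local Notation cone := (cone R).
Local Notation ray := (ray R).
Local Notation lin_indep := (lin_indep R).
Local Notation strongly_convex := (strongly_convex R).
Local Notation is_face := (is_face R).
Local Notation seteq := (seteq R).
Local Notation vsubset := (vsubset R).
Local Notation conv := (conv R).

Definition propb (P : Prop) : bool := if excluded_middle_informative P then true else false.
Lemma propbP P : reflect P (propb P).
Proof. rewrite /propb; case: excluded_middle_informative => h; constructor => //. Qed.

Lemma sub_count_lt (T : eqType) (a b : pred T) (s : seq T) :
  (forall x, a x -> b x) -> (exists x, [/\ x \in s, b x & ~~ a x]) ->
  (count a s < count b s)%N.
Proof.
elim: s => [|y s IH] hab [x [hx hb hna]] //.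
rewrite /=; move: hx; rewrite in_cons => /orP [/eqP ex | hx].
  rewrite -ex hb (negbTE hna) add0n add1n ltnS; exact: sub_count.
rewrite -addnS; apply: leq_add.
  by case: (boolP (a y)) => // /hab ->.
by apply: IH => //; exists x.
Qed.

Lemma exists_nth_choice (A B : Type) (a0 : A) (b0 : B) (l : seq A) (P : A -> B -> Prop) :
  (forall i, (i < size l)%N -> exists b, P (nth a0 l i) b) ->
  exists l' : seq B, size l' = size l /\
    forall i, (i < size l)%N -> P (nth a0 l i) (nth b0 l' i).
Proof.
elim: l => [|a l IH] h; first by exists [::].
have [b hb] := h 0%N isT.
have [l' [hs hl']] := IH (fun i hi => h i.+1 hi).
by exists (b :: l'); split; [rewrite /= hs | case].
Qed.

Lemma exists_seq_choice (A B : eqType) (l : seq A) (P : A -> B -> Prop) :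
  (forall a, a \in l -> exists b, P a b) ->
  exists l' : seq B, (forall b, b \in l' -> exists2 a, a \in l & P a b) /\
    (forall a, a \in l -> exists2 b, b \in l' & P a b).
Proof.
elim: l => [|a l IH] h; first by exists [::].
have [b hb] := h a (mem_head _ _).
have [l' [h1 h2]] := IH (fun x hx => h x (@mem_behead _ (a :: l) x hx)).
exists (b :: l'); split.
  move=> y; rewrite in_cons => /orP [/eqP -> | hy]; first by exists a; rewrite ?mem_head.
  by have [x hx hP] := h1 y hy; exists x; rewrite // in_cons hx orbT.
move=> x; rewrite in_cons => /orP [/eqP -> | hx]; first by exists b; rewrite ?mem_head.
by have [y hy hP] := h2 x hx; exists y; rewrite // in_cons hy orbT.
Qed.

Lemma exists_seq_argmin (s : seq nat) (F : nat -> R) : s != [::] ->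
  exists2 j, j \in s & forall l, l \in s -> F j <= F l.
Proof.
elim: s => [|a s IH] // _.
case: (eqVneq s [::]) => [-> | hs].
  by exists a; rewrite ?mem_head // => l; rewrite inE => /eqP ->.
have [j hj hmin] := IH hs.
case: (lerP (F a) (F j)) => h.
  exists a; first exact: mem_head.
  move=> l; rewrite in_cons => /orP [/eqP -> // | hl].
  exact: le_trans h (hmin l hl).
exists j; first by rewrite in_cons hj orbT.
move=> l; rewrite in_cons => /orP [/eqP -> | hl]; [exact: ltW | exact: hmin].
Qed.

Lemma pairingDl m1 m2 u : pairing (m1 + m2) u = pairing m1 u + pairing m2 u.
Proof. rewrite /Defs.pairing -big_split; apply: eq_bigr => i _; by rewrite mxE mulrDl. Qed.
Lemma pairingZl t m u : pairing (t *: m) u = t * pairing m u.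
Proof. rewrite /Defs.pairing mulr_sumr; apply: eq_bigr => i _; by rewrite mxE mulrA. Qed.
Lemma pairingNl m u : pairing (- m) u = - pairing m u.
Proof. rewrite /Defs.pairing -sumrN; apply: eq_bigr => i _; by rewrite mxE mulNr. Qed.
Lemma pairingBl m1 m2 u : pairing (m1 - m2) u = pairing m1 u - pairing m2 u.
Proof. by rewrite pairingDl pairingNl. Qed.
Lemma pairingDr m u1 u2 : pairing m (u1 + u2) = pairing m u1 + pairing m u2.
Proof. rewrite /Defs.pairing -big_split; apply: eq_bigr => i _; by rewrite mxE mulrDr. Qed.
Lemma pairingZr t m u : pairing m (t *: u) = t * pairing m u.
Proof. rewrite /Defs.pairing mulr_sumr; apply: eq_bigr => i _; by rewrite mxE mulrCA. Qed.
Lemma pairing0r m : pairing m 0 = 0.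
Proof. rewrite /Defs.pairing big1 // => i _; by rewrite mxE mulr0. Qed.
Lemma pairing0l u : pairing 0 u = 0.
Proof. rewrite /Defs.pairing big1 // => i _; by rewrite mxE mul0r. Qed.
Lemma pairing_sumr m (I : Type) (r : seq I) (P : pred I) (F : I -> vec) :
  pairing m (\sum_(i <- r | P i) F i) = \sum_(i <- r | P i) pairing m (F i).
Proof. exact: (big_morph (pairing m) (pairingDr m) (pairing0r m)). Qed.
Lemma pairing_suml u (I : Type) (r : seq I) (P : pred I) (F : I -> vec) :
  pairing (\sum_(i <- r | P i) F i) u = \sum_(i <- r | P i) pairing (F i) u.
Proof. exact: (big_morph (pairing^~ u) (fun a b => pairingDl a b u) (pairing0l u)). Qed.

(* Coefficients are indexed by [nat]; those at indices [>= size S] are ignored. *)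
Definition lcomb (S : seq lat) (c : nat -> R) : vec :=
  \sum_(i < size S) c i *: lv (nth 0 S i).

Definition extn n (c : 'I_n -> R) : nat -> R :=
  fun i => match insub i with Some k => c k | None => 0 end.
Lemma extnE n (c : 'I_n -> R) (k : 'I_n) : extn c k = c k.
Proof. by rewrite /extn valK. Qed.

Lemma coneE S x : cone S x <->
  exists c : nat -> R, (forall i, (i < size S)%N -> 0 <= c i) /\ x = lcomb S c.
Proof.
split.
  case=> c [c0 ->]; exists (extn c); split.
    by move=> i hi; rewrite /extn insubT.
  by apply: eq_bigr => i _; rewrite extnE.
case=> c [c0 ->]; exists (fun k => c k); split => // i; exact: c0.
Qed.

Lemma lin_indepE S : lin_indep S <->
  forall c : nat -> R, lcomb S c = 0 -> forall i, (i < size S)%N -> c i = 0.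
Proof.
split.
  move=> h c hc i hi; exact: (h (fun k => c k) hc (Ordinal hi)).
move=> h c hc i; rewrite -extnE; apply: h => //.
by rewrite -[RHS]hc; apply: eq_bigr => k _; rewrite extnE.
Qed.

Lemma lcomb_cons a S c : lcomb (a :: S) c = c 0%N *: lv a + lcomb S (fun i => c i.+1).
Proof. by rewrite /lcomb /= big_ord_recl. Qed.
Lemma lcomb_nil c : lcomb [::] c = 0.
Proof. by rewrite /lcomb big_ord0. Qed.
Lemma lcomb0 S : lcomb S (fun _ => 0) = 0.
Proof. by rewrite /lcomb big1 // => i _; rewrite scale0r. Qed.

Lemma lcombD S c1 c2 : lcomb S c1 + lcomb S c2 = lcomb S (fun i => c1 i + c2 i).
Proof. rewrite /lcomb -big_split; apply: eq_bigr => i _; by rewrite scalerDl. Qed.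
Lemma lcombZ t S c : t *: lcomb S c = lcomb S (fun i => t * c i).
Proof. rewrite /lcomb scaler_sumr; apply: eq_bigr => i _; by rewrite scalerA. Qed.
Lemma eq_lcomb S c1 c2 : (forall i, (i < size S)%N -> c1 i = c2 i) -> lcomb S c1 = lcomb S c2.
Proof. move=> h; apply: eq_bigr => i _; by rewrite h. Qed.
Lemma pairing_lcomb m S c :
  pairing m (lcomb S c) = \sum_(i < size S) c i * pairing m (lv (nth 0 S i)).
Proof. rewrite pairing_sumr; apply: eq_bigr => i _; by rewrite pairingZr. Qed.

Lemma cone_cons a S x : cone (a :: S) x <->
  exists t y, [/\ 0 <= t, cone S y & x = t *: lv a + y].
Proof.
rewrite coneE; split.
  case=> c [c0 ->]; exists (c 0%N), (lcomb S (fun i => c i.+1)); split.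
  - exact: c0.
  - by apply/coneE; exists (fun i => c i.+1); split => // i hi; apply: c0.
  - by rewrite lcomb_cons.
case=> t [y [t0 /coneE [c [c0 ->]] ->]].
exists (fun i => if i is k.+1 then c k else t); split.
  by case=> // i hi; apply: c0.
by rewrite lcomb_cons.
Qed.

Lemma cone_nil x : cone [::] x <-> x = 0.
Proof.
rewrite coneE; split; first by case=> c [_ ->]; rewrite lcomb_nil.
by move=> ->; exists (fun _ => 0); split => //; rewrite lcomb_nil.
Qed.

Lemma cone0 S : cone S 0.
Proof.
apply/coneE; exists (fun _ => 0); split => //.
by rewrite /lcomb big1 // => i _; rewrite scale0r.
Qed.

Lemma coneD S x y : cone S x -> cone S y -> cone S (x + y).
Proof.
move=> /coneE [c [c0 ->]] /coneE [d [d0 ->]]; apply/coneE.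
exists (fun i => c i + d i); split; last by rewrite lcombD.
by move=> i hi; rewrite addr_ge0 ?c0 ?d0.
Qed.

Lemma coneZ S t x : 0 <= t -> cone S x -> cone S (t *: x).
Proof.
move=> t0 /coneE [c [c0 ->]]; apply/coneE.
exists (fun i => t * c i); split; last by rewrite lcombZ.
by move=> i hi; rewrite mulr_ge0 ?c0.
Qed.

Lemma cone_mem S g : g \in S -> cone S (lv g).
Proof.
elim: S => //= a S IH; rewrite in_cons => /orP [/eqP -> | hg]; apply/cone_cons.
  by exists 1, 0; split => //; [exact: cone0 | rewrite scale1r addr0].
by exists 0, (lv g); split => //; [exact: IH | rewrite scale0r add0r].
Qed.

Lemma cone_gen_sub S T x : (forall g, g \in S -> cone T (lv g)) -> cone S x -> cone T x.
Proof.
elim: S x => [|a S IH] x h.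
  by move/cone_nil ->; exact: cone0.
case/cone_cons => t [y [t0 hy ->]]; apply: coneD.
  by apply: coneZ => //; apply: h; rewrite mem_head.
by apply: IH => // g hg; apply: h; rewrite in_cons hg orbT.
Qed.

Lemma cone_pairing_ge0 m S x : (forall g, g \in S -> 0 <= pairing m (lv g)) ->
  cone S x -> 0 <= pairing m x.
Proof.
elim: S x => [|a S IH] x h.
  by move/cone_nil ->; rewrite pairing0r.
case/cone_cons => t [y [t0 hy ->]]; rewrite pairingDr pairingZr.
apply: addr_ge0; first by rewrite mulr_ge0 // h // mem_head.
by apply: IH => // g hg; apply: h; rewrite in_cons hg orbT.
Qed.

Lemma cone_pairing_eq0 m S x : (forall g, g \in S -> pairing m (lv g) = 0) ->
  cone S x -> pairing m x = 0.
Proof.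
elim: S x => [|a S IH] x h.
  by move/cone_nil ->; rewrite pairing0r.
case/cone_cons => t [y [t0 hy ->]]; rewrite pairingDr pairingZr h ?mem_head // mulr0 add0r.
by apply: IH => // g hg; apply: h; rewrite in_cons hg orbT.
Qed.

Lemma cone_pairing_face m S x : (forall g, g \in S -> 0 <= pairing m (lv g)) ->
  cone S x -> pairing m x = 0 ->
  cone [seq g <- S | pairing m (lv g) == 0] x.
Proof.
elim: S x => [|a S IH] x h.
  by move/cone_nil ->; rewrite /=; move=> _; apply: cone0.
case/cone_cons => t [y [t0 hy ->]]; rewrite pairingDr pairingZr => hz.
have ha : 0 <= pairing m (lv a) by apply: h; rewrite mem_head.
have hS : forall g, g \in S -> 0 <= pairing m (lv g).
  by move=> g hg; apply: h; rewrite in_cons hg orbT.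
have hy0 := cone_pairing_ge0 hS hy.
have [h1 h2] : t * pairing m (lv a) = 0 /\ pairing m y = 0.
  have h1 : 0 <= t * pairing m (lv a) by rewrite mulr_ge0.
  split; apply/eqP; rewrite eq_le ?h1 ?hy0 andbT.
    by rewrite -hz lerDl.
  by rewrite -hz lerDr.
have hy' := IH y hS hy h2.
rewrite /=; case: ifP => ha0.
  apply/cone_cons; exists t, y; split => //.
have -> : t = 0.
  by move/eqP: h1; rewrite mulf_eq0 ha0 orbF => /eqP.
by rewrite scale0r add0r.
Qed.

Lemma lat2vec_eq0 n : lv n = 0 -> n = 0.
Proof.
move=> h; apply/rowP => j; move/rowP: h => /(_ j); rewrite !mxE.
by move/eqP; rewrite intr_eq0 => /eqP.
Qed.

Lemma lat2vec0 : lv 0 = 0.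
Proof. by apply/rowP => j; rewrite !mxE. Qed.

Lemma lin_indep_neq0 S g : lin_indep S -> g \in S -> lv g != 0.
Proof.
move/lin_indepE => h /(nthP 0) [i hi <-]; apply/eqP => h0.
have h1 : lcomb S (fun k => if k == i then 1 else 0) = 0.
  rewrite /lcomb (bigD1 (Ordinal hi)) //= eqxx h0 scaler0 add0r big1 // => k hk.
  by rewrite ifN ?scale0r //; apply: contra hk => /eqP e; apply/eqP/val_inj.
by have := h _ h1 i hi; rewrite eqxx => /eqP; rewrite oner_eq0.
Qed.

Definition dual_basis_of (S : seq lat) (f : nat -> vec) :=
  forall i k, (i < size S)%N -> (k < size S)%N ->
    pairing (f i) (lv (nth 0 S k)) = (i == k)%:R.

(* The dual functionals are the columns of a left inverse of the row-free
   matrix whose rows are the generators. *)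
Lemma exists_dual_basis S : lin_indep S -> exists f, dual_basis_of S f.
Proof.
move=> hS; set n := size S.
pose A : 'M[R]_(n, 4) := \matrix_(i < n, j < 4) lv (nth 0 S i) 0 j.
have rowA k : row k A = lv (nth 0 S k) by apply/rowP => j; rewrite !mxE.
have : row_free A.
  rewrite -kermx_eq0; apply/eqP/row_matrixP => i; rewrite row0.
  set u := row i (kermx A).
  have hu : u *m A = 0 by rewrite /u -row_mul mulmx_ker row0.
  move: hu; rewrite mulmx_sum_row => hu.
  have hl : lcomb S (extn (fun k : 'I_n => u 0 k)) = 0.
    by rewrite -[RHS]hu; apply: eq_bigr => k _; rewrite extnE rowA.
  apply/rowP => k; rewrite [RHS]mxE.
  have := (proj1 (lin_indepE S) hS) _ hl k (ltn_ord k).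
  by rewrite (extnE (fun k : 'I_n => u 0 k)).
case/row_freeP => B hB.
exists (fun i => if insub i is Some k then \row_j B j k else 0).
move=> i k hi hk; rewrite insubT /Defs.pairing.
have := congr1 (fun M : 'M[R]_n => M (Ordinal hk) (Ordinal hi)) hB; rewrite /= !mxE.
have -> : (i == k) = (Ordinal hk == Ordinal hi :> 'I_n) by rewrite eq_sym.
move=> <-.
apply: eq_bigr => j _; rewrite !mxE mulrC //.
Qed.

Lemma dual_basis_coord S f c i : dual_basis_of S f -> (i < size S)%N ->
  pairing (f i) (lcomb S c) = c i.
Proof.
move=> hf hi; rewrite pairing_lcomb (bigD1 (Ordinal hi)) //= hf // eqxx mulr1.
rewrite big1 ?addr0 // => k hk; rewrite hf //.
have /negbTE -> : i != k by apply: contra hk => /eqP e; apply/eqP/val_inj.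
by rewrite mulr0.
Qed.

Definition dual_basis (S : seq lat) : nat -> vec :=
  epsilon (inhabits (fun _ => 0)) (dual_basis_of S).

Lemma dual_basisP S : lin_indep S -> dual_basis_of S (dual_basis S).
Proof. by move=> h; apply: epsilon_spec; apply: exists_dual_basis. Qed.

Lemma cone_coords S x : lin_indep S -> cone S x ->
  (forall i, (i < size S)%N -> 0 <= pairing (dual_basis S i) x) /\
  x = lcomb S (fun i => pairing (dual_basis S i) x).
Proof.
move=> hS /coneE [a [a0 ->]]; have hd := dual_basisP hS.
split; first by move=> i hi; rewrite dual_basis_coord // a0.
by apply: eq_lcomb => i hi; rewrite dual_basis_coord.
Qed.

Lemma lcomb_nat S c : lcomb S c = \sum_(0 <= i < size S) c i *: lv (nth 0 S i).
Proof. by rewrite big_mkord. Qed.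

Lemma size_set_nth_lt (S : seq lat) j (v : lat) : (j < size S)%N -> size (set_nth 0 S j v) = size S.
Proof. by move=> hj; rewrite size_set_nth; apply/maxn_idPr. Qed.

Lemma lcomb_set_nth (S : seq lat) j (v : lat) d : (j < size S)%N ->
  lcomb (set_nth 0 S j v) d =
  lcomb S (fun l => if l == j then 0 else d l) + d j *: lv v.
Proof.
move=> hj; rewrite !lcomb_nat size_set_nth_lt // !big_mkord.
rewrite (bigD1 (Ordinal hj)) //= [X in _ = X + _](bigD1 (Ordinal hj)) //=.
rewrite nth_set_nth /= !eqxx scale0r add0r addrC; congr (_ + _).
apply: eq_bigr => i hi; rewrite nth_set_nth /=.
have /negbTE -> : val i != j by apply: contra hi => /eqP e; apply/eqP/val_inj.
by [].
Qed.

Lemma lcomb_subseq S T : subseq S T -> forall c, exists c',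
  lcomb S c = lcomb T c' /\
  forall i, (i < size S)%N -> exists i', (i' < size T)%N /\ c' i' = c i.
Proof.
elim: T S => [|y T IH] S.
  by rewrite subseq0 => /eqP -> c; exists c; split => //; rewrite !lcomb_nil.
case: S => [|x S] hsub c.
  by exists (fun _ => 0); split => //; rewrite lcomb_nil lcomb0.
move: hsub => /=; case: eqP => [<- hsub | _ hsub].
  have [c'' [e hi]] := IH S hsub (fun i => c i.+1).
  exists (fun i => if i is k.+1 then c'' k else c 0%N); split.
    by rewrite !lcomb_cons e.
  case=> [|i] /=; first by exists 0%N.
  by move=> /hi [i' [h1 h2]]; exists i'.+1.
have [c'' [e hi]] := IH (x :: S) hsub c.
exists (fun i => if i is k.+1 then c'' k else 0); split.
  by rewrite [RHS]lcomb_cons -e scale0r add0r.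
by move=> i /hi [i' [h1 h2]]; exists i'.+1.
Qed.

Lemma lin_indep_subseq S T : subseq S T -> lin_indep T -> lin_indep S.
Proof.
move=> hsub /lin_indepE hT; apply/lin_indepE => c hc i hi.
have [c' [e hidx]] := lcomb_subseq hsub c.
have [i' [h1 <-]] := hidx i hi.
by apply: hT => //; rewrite -e.
Qed.

Lemma cone_subseq S T x : subseq S T -> cone S x -> cone T x.
Proof.
move=> hsub; apply: cone_gen_sub => g hg; apply: cone_mem.
exact: (mem_subseq hsub).
Qed.

Lemma lin_indep_strongly_convex S : lin_indep S -> strongly_convex (cone S).
Proof.
move/lin_indepE => hS x /coneE [a [a0 ha]] /coneE [b [b0 hb]].
have e : lcomb S (fun i => a i + b i) = 0 by rewrite -lcombD -ha -hb subrr.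
rewrite ha; rewrite -(lcomb0 S); apply: eq_lcomb => i hi.
have := hS _ e i hi => /eqP; rewrite paddr_eq0 ?a0 ?b0 //.
by case/andP => /eqP.
Qed.

Lemma exists_face_functional S (p : pred lat) : lin_indep S -> exists m : vec,
  (forall u, cone S u -> 0 <= pairing m u) /\
  (forall u, cone S u -> (pairing m u = 0 <-> cone [seq g <- S | p g] u)).
Proof.
move=> hS; have [f hf] := exists_dual_basis hS.
pose m := \sum_(i < size S | ~~ p (nth 0 S i)) f i.
have m_gen g : g \in S -> pairing m (lv g) = (~~ p g)%:R.
  case/(nthP 0) => k hk <-; rewrite pairing_suml.
  rewrite (eq_bigr (fun i : 'I_(size S) => (val i == k)%:R)); last first.
    by move=> i _; rewrite hf.
  rewrite big_mkcond (bigD1 (Ordinal hk)) //= eqxx big1 ?addr0; first by case: (p _).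
  move=> i hi; case: ifP => // _.
  by have /negbTE -> : val i != k by apply: contra hi => /eqP e; apply/eqP/val_inj.
have m_ge0 g : g \in S -> 0 <= pairing m (lv g) by move=> hg; rewrite m_gen //; case: (p g).
exists m; split=> [u|u hu]; first exact: cone_pairing_ge0.
split=> [h0 | hu'].
  apply: (cone_gen_sub _ (cone_pairing_face m_ge0 hu h0)) => g.
  rewrite mem_filter => /andP [hz hg]; apply: cone_mem.
  rewrite mem_filter hg andbT; move: hz; rewrite m_gen //.
  by case: (p g) => //=; rewrite oner_eq0.
apply: (cone_pairing_eq0 _ hu') => g; rewrite mem_filter => /andP [hp hg].
by rewrite m_gen // hp.
Qed.

Lemma cone_rescale (T T' : seq lat) (lam : nat -> R) : size T' = size T ->
  (forall i, (i < size T)%N -> 0 < lam i /\ lv (nth 0 T i) = lam i *: lv (nth 0 T' i)) ->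
  (forall x, cone T x <-> cone T' x) /\ (lin_indep T -> lin_indep T').
Proof.
move=> hs hl.
have lcomb_rescale c : lcomb T c = lcomb T' (fun i => c i * lam i).
  rewrite !lcomb_nat hs; apply: eq_big_nat => i /andP [_ hi].
  by rewrite (hl i hi).2 scalerA.
split.
  move=> x; rewrite !coneE; split.
    case=> c [c0 ->]; exists (fun i => c i * lam i); split; last exact: lcomb_rescale.
    by move=> i; rewrite hs => hi; rewrite mulr_ge0 ?c0 // ltW // (hl i hi).1.
  case=> c [c0 ->]; exists (fun i => c i / lam i); split.
    by move=> i hi; rewrite divr_ge0 ?c0 ?hs // ltW // (hl i hi).1.
  rewrite lcomb_rescale; apply: eq_lcomb => i; rewrite hs => hi.
  by rewrite mulfVK // gt_eqF // (hl i hi).1.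
move=> /lin_indepE hT; apply/lin_indepE => d hd i; rewrite hs => hi.
have e : lcomb T (fun i => d i / lam i) = 0.
  rewrite lcomb_rescale -hd; apply: eq_lcomb => k; rewrite hs => hk.
  by rewrite mulfVK // gt_eqF // (hl k hk).1.
have := hT _ e i hi => /eqP; rewrite mulf_eq0 invr_eq0 (gt_eqF (hl i hi).1) orbF.
by move/eqP.
Qed.

Lemma cone_gens_eq_ray (l : seq lat) t x : (forall g, g \in l -> g = t) -> cone l x -> ray (lv t) x.
Proof.
elim: l x => [|a l IH] x h.
  by move/cone_nil => ->; exists 0; rewrite scale0r.
case/cone_cons => s [y [s0 hy ->]].
have [r [r0 ->]] := IH y (fun g hg => h g (@mem_behead _ (a :: l) g hg)) hy.
rewrite (h a (mem_head _ _)); exists (s + r); split; first by rewrite addr_ge0.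
by rewrite scalerDl.
Qed.

Lemma ray_is_face T t (C : vec -> Prop) : lin_indep T -> t \in T ->
  seteq C (cone T) -> is_face (ray (lv t)) C.
Proof.
move=> hT ht hC.
have [al [alnn aliff]] := exists_face_functional (pred1 t) hT.
exists al; split; first by move=> u /hC; apply: alnn.
move=> u; split.
  case=> s [s0 ->].
  have hu : cone T (s *: lv t) by apply: coneZ => //; apply: cone_mem.
  split; first by apply/hC.
  apply/(aliff _ hu); apply: coneZ => //; apply: cone_mem.
  by rewrite mem_filter /= eqxx.
case=> /hC hu /(aliff _ hu) hf.
by apply: (cone_gens_eq_ray _ hf) => g; rewrite mem_filter => /andP [/eqP].
Qed.

Lemma exists_small_pos (l : seq (R * R)) :
  exists2 e, 0 < e & forall p, p \in l -> 0 < p.1 -> 0 < p.1 + e * p.2.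
Proof.
have small (a b e : R) : 0 < a -> 0 < e -> e <= a / (`|b| + 1) -> 0 < a + e * b.
  move=> ha he hle; have hb1 : 0 < `|b| + 1 by rewrite ltr_wpDl.
  have h1 : e * `|b| < a.
    apply: (le_lt_trans (y := a / (`|b| + 1) * `|b|)); first by rewrite ler_wpM2r.
    by rewrite mulrAC ltr_pdivrMr // ltr_pM2l // ltrDl.
  have h2 : - (e * `|b|) <= e * b.
    rewrite -mulrN; apply: ler_wpM2l; first exact: ltW.
    by rewrite lerNl -normrN ler_norm.
  by apply: (lt_le_trans _ (lerD (lexx a) h2)); rewrite subr_gt0.
suff [e he hle] : exists2 e, 0 < e &
    forall p, p \in l -> 0 < p.1 -> e <= p.1 / (`|p.2| + 1).
  by exists e => // p hp hp1; apply: small => //; apply: hle.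
elim: l => [|p l [e he hle]]; first by exists 1.
case: (ltrP 0 p.1) => hp; last first.
  exists e => // q; rewrite in_cons => /orP [/eqP -> | hq]; last exact: hle.
  by rewrite ltNge hp.
have hpe : 0 < p.1 / (`|p.2| + 1) by rewrite divr_gt0 // ltr_wpDl.
exists (Num.min e (p.1 / (`|p.2| + 1))); first by rewrite lt_min he hpe.
move=> q; rewrite in_cons => /orP [/eqP -> | hq] hq1; first by rewrite ge_min lexx orbT.
by rewrite ge_min hle.
Qed.

Lemma lt_dominates (a b : R) (P : Prop) : a < b -> a <= b /\ (b = a -> P).
Proof. by move=> h; split=> [|eq_ba]; [exact: ltW | rewrite eq_ba ltxx in h]. Qed.

Definition cell := (seq lat * vec)%type.

Definition coherent (D : seq cell) :=
  [/\ forall s, s \in D -> lin_indep s.1,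
      forall s t g, s \in D -> t \in D -> g \in s.1 ->
        pairing s.2 (lv g) <= pairing t.2 (lv g),
      forall s t g, s \in D -> t \in D -> g \in s.1 ->
        pairing t.2 (lv g) = pairing s.2 (lv g) -> cone t.1 (lv g)
    & forall x, exists2 s, s \in D & cone s.1 x].

Section Coherent.
Variable D : seq cell.
Hypothesis hD : coherent D.

Lemma coherent_min s t u : s \in D -> t \in D -> cone s.1 u ->
  pairing s.2 u <= pairing t.2 u /\ (pairing t.2 u = pairing s.2 u -> cone t.1 u).
Proof.
case: hD => _ Dle Deq _ hs ht hu.
have hnn g : g \in s.1 -> 0 <= pairing (t.2 - s.2) (lv g).
  by move=> hg; rewrite pairingBl subr_ge0 Dle.
split; first by rewrite -subr_ge0 -pairingBl; apply: cone_pairing_ge0 hnn hu.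
move=> e; have h0 : pairing (t.2 - s.2) u = 0 by rewrite pairingBl e subrr.
apply: (cone_gen_sub _ (cone_pairing_face hnn hu h0)) => g; rewrite mem_filter.
case/andP => /eqP; rewrite pairingBl => /eqP; rewrite subr_eq0 => /eqP e' hg.
exact: Deq e'.
Qed.

Lemma coherent_agree s t u : s \in D -> t \in D -> cone s.1 u -> cone t.1 u ->
  pairing s.2 u = pairing t.2 u.
Proof.
move=> hs ht hu hu'; apply/eqP; rewrite eq_le.
by rewrite (coherent_min hs ht hu).1 (coherent_min ht hs hu').1.
Qed.

End Coherent.

Fixpoint all_masks (n : nat) : seq bitseq :=
  if n is k.+1 then [seq true :: b | b <- all_masks k] ++ [seq false :: b | b <- all_masks k]
  else [:: [::]].

Lemma all_masksP m : m \in all_masks (size m).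
Proof. by elim: m => [|[] m IH] //=; rewrite mem_cat map_f ?orbT. Qed.

Definition faces_fan (D : seq cell) : fanT :=
  flatten [seq [seq mask b s.1 | b <- all_masks (size s.1)] | s <- D].

Lemma faces_fanP D S : S \in faces_fan D <-> exists2 s, s \in D & subseq S s.1.
Proof.
split.
  case/flattenP => l /mapP [s hs ->] /mapP [b _ ->].
  by exists s => //; exact: mask_subseq.
case=> s hs /subseqP [m hm ->]; apply/flattenP.
exists [seq mask b s.1 | b <- all_masks (size s.1)]; first exact: map_f.
by apply: map_f; rewrite -hm all_masksP.
Qed.

Lemma cone_filter_mem T t x : subseq T t ->
  (cone T x <-> cone [seq g <- t | g \in T] x).
Proof.
move=> hs; split; apply: cone_gen_sub => g hg; apply: cone_mem.
  by rewrite mem_filter hg (mem_subseq hs).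
by move: hg; rewrite mem_filter => /andP [].
Qed.

Lemma cone_seq1 g x : cone [:: g] x <-> ray (lv g) x.
Proof.
rewrite cone_cons; split.
  by case=> t [y [t0 /cone_nil -> ->]]; exists t; rewrite addr0.
by case=> t [t0 ->]; exists t, 0; split => //; [exact/cone_nil | rewrite addr0].
Qed.

Lemma rayZ t v : 0 < t -> seteq (ray (t *: v)) (ray v).
Proof.
move=> ht x; split.
  by case=> s [s0 ->]; exists (s * t); rewrite scalerA mulr_ge0 // ltW.
case=> s [s0 ->]; exists (s / t); split; first by rewrite divr_ge0 // ltW.
by rewrite scalerA mulfVK // gt_eqF.
Qed.

Section FacesFan.
Variable D : seq cell.
Hypothesis hD : coherent D.

Lemma faces_fan_lin_indep S : S \in faces_fan D -> lin_indep S.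
Proof.
case: hD => Dlin _ _ _ /faces_fanP [s hs hS].
exact: lin_indep_subseq hS (Dlin _ hs).
Qed.

(* [m_t - m_s] cuts the face [s \cap t] out of [s]; adding a small multiple of
   a functional cutting [T] out of [t] cuts [S \cap T] out of the face [S]. *)
Lemma faces_fan_face_inter S T : S \in faces_fan D -> T \in faces_fan D ->
  is_face (fun x => cone S x /\ cone T x) (cone S).
Proof.
move=> /faces_fanP [s hs hSs] /faces_fanP [t ht hTt].
case: (hD) => Dlin Dle Deq _.
have [al [al_ge0 al_eq0]] := exists_face_functional [pred g | g \in T] (Dlin _ ht).
pose f := t.2 - s.2.
have [e he hl] := exists_small_pos [seq (pairing f (lv g), pairing al (lv g)) | g <- S].
have gS g : g \in S -> g \in s.1 by apply: mem_subseq.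
have f_ge0 g : g \in S -> 0 <= pairing f (lv g).
  by move=> hg; rewrite pairingBl subr_ge0 Dle // gS.
have f_gt0 g : g \in S -> 0 < pairing f (lv g) -> 0 < pairing (f + e *: al) (lv g).
  by move=> hg hp; have := hl _ (map_f _ hg); rewrite /= pairingDl pairingZl; apply.
have f_eq0 g : g \in S -> pairing f (lv g) = 0 ->
    cone t.1 (lv g) /\ pairing (f + e *: al) (lv g) = e * pairing al (lv g).
  move=> hg hp; split; last by rewrite pairingDl pairingZl hp add0r.
  by apply: (Deq s) => //; [exact: gS | move/eqP: hp; rewrite pairingBl subr_eq0 => /eqP].
have fe_ge0 g : g \in S -> 0 <= pairing (f + e *: al) (lv g).
  move=> hg; have := f_ge0 g hg; rewrite le_eqVlt => /orP [/eqP h0 | hp].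
    have [hc ->] := f_eq0 g hg (esym h0).
    by apply: mulr_ge0; [exact: ltW | exact: al_ge0].
  exact: ltW (f_gt0 g hg hp).
exists (f + e *: al); split=> [u|u]; first exact: cone_pairing_ge0.
split.
  case=> hu hu'; split => //.
  have hus : cone s.1 u := cone_subseq hSs hu.
  have hut : cone t.1 u := cone_subseq hTt hu'.
  rewrite pairingDl pairingZl pairingBl (coherent_agree hD hs ht hus hut) subrr add0r.
  have -> : pairing al u = 0 by apply/(al_eq0 _ hut)/(cone_filter_mem _ hTt).
  by rewrite mulr0.
case=> hu h0; split => //.
apply: (cone_gen_sub _ (cone_pairing_face fe_ge0 hu h0)) => g; rewrite mem_filter.
case/andP => /eqP hb hg.
have hf0 : pairing f (lv g) = 0.
  apply/eqP; rewrite eq_le f_ge0 // andbT leNgt; apply/negP => hp.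
  by have := f_gt0 g hg hp; rewrite hb ltxx.
have [hc hv] := f_eq0 g hg hf0.
move: hb; rewrite hv => /eqP; rewrite mulf_eq0 gt_eqF //= => /eqP hal.
exact/(cone_filter_mem _ hTt)/(al_eq0 _ hc).1.
Qed.

Lemma faces_fan_is_fan : is_fan R (faces_fan D).
Proof.
split.
- by move=> S hS; apply/lin_indep_strongly_convex/faces_fan_lin_indep.
- move=> S tau hS [m [hm htau]].
  exists [seq g <- S | pairing m (lv g) == 0].
    case/faces_fanP: hS => s hs hSs; apply/faces_fanP; exists s => //.
    exact: subseq_trans (filter_subseq _ _) hSs.
  move=> u; rewrite htau; split.
    by case=> hu h0; apply: cone_pairing_face => // g hg; apply/hm/cone_mem.
  move=> hu; split; first exact: cone_subseq (filter_subseq _ _) hu.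
  by apply: (cone_pairing_eq0 _ hu) => g; rewrite mem_filter => /andP [/eqP].
- move=> S T hS hT; split; first exact: faces_fan_face_inter.
  have [m [hm hinter]] := faces_fan_face_inter hT hS.
  by exists m; split => // u; rewrite -hinter; split; case.
Qed.

Lemma faces_fan_rays V :
  (forall s g, s \in D -> g \in s.1 -> conv V (lv g)) ->
  (forall n : lat, n != 0 -> conv V (lv n) ->
     exists2 s, s \in D & exists2 g, g \in s.1 & seteq (ray (lv g)) (ray (lv n))) ->
  rays_are R (faces_fan D) V.
Proof.
move=> hconv hrays; split; last first.
  move=> n hn hc; have [s hs [g hg hr]] := hrays n hn hc.
  exists [:: g]; first by apply/faces_fanP; exists s; rewrite ?sub1seq.
  by move=> x; rewrite cone_seq1 hr.
move=> S v hS hv hSv; have [s hs hSs] := (faces_fanP D S).1 hS.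
case: S hS hSs hSv => [|g S'] hS hSs hSv.
  have /cone_nil v0 : cone [::] v by apply/hSv; exists 1; rewrite scale1r.
  by rewrite v0 eqxx in hv.
have hg : g \in s.1 by apply: (mem_subseq hSs); rewrite mem_head.
have hgnz : lv g != 0.
  by apply: lin_indep_neq0 (mem_head g S'); apply: faces_fan_lin_indep.
have [t [t0 et]] := (hSv (lv g)).1 (cone_mem (mem_head _ _)).
have tpos : 0 < t.
  by rewrite lt_def t0 andbT; apply: contra hgnz => /eqP t00; rewrite et t00 scale0r.
exists g; split; [by apply: contra hgnz => /eqP ->; rewrite lat2vec0 | exact: hconv hg |].
by move=> x; rewrite hSv et; apply: iff_sym; exact: (rayZ _ tpos x).
Qed.

(* The support function takes at [u] the value [m_s u] of any cell [s]
   containing [u]; by coherence the choice of [s] does not matter. *)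
Lemma faces_fan_projective : projective R (faces_fan D).
Proof.
case: (hD) => _ _ _ Dcover.
pose sel u := epsilon (inhabits ([::], 0) : inhabited cell) (fun s => s \in D /\ cone s.1 u).
have selP u : sel u \in D /\ cone (sel u).1 u.
  have [s hs hu] := Dcover u.
  exact: (epsilon_spec _ (fun s => s \in D /\ cone s.1 u) (ex_intro _ s (conj hs hu))).
exists (fun u => pairing (sel u).2 u); split.
  move=> S /faces_fanP [s hs hSs]; exists s.2 => u hu.
  have [h1 h2] := selP u; exact (coherent_agree hD h1 hs h2 (cone_subseq hSs hu)).
move=> S [hS hmax]; have [s hs hSs] := (faces_fanP D S).1 hS.
have hsS : vsubset (cone s.1) (cone S).
  apply: hmax; first by apply/faces_fanP; exists s.
  by move=> x; apply: cone_subseq hSs.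
exists s.2 => u; have [h1 h2] := selP u.
have [le_s eq_s] := coherent_min hD h1 hs h2.
split => //; split=> [e | hu]; first by apply/hsS/eq_s; rewrite e.
exact (coherent_agree hD h1 hs h2 (cone_subseq hSs hu)).
Qed.

Lemma faces_fan_refines F1 :
  (forall s, s \in D -> exists2 S1, S1 \in F1 & vsubset (cone s.1) (cone S1)) ->
  refines R (faces_fan D) F1.
Proof.
move=> href S /faces_fanP [s hs hSs]; have [S1 h1 h2] := href s hs.
by exists S1 => // x hx; apply/h2/(cone_subseq hSs).
Qed.

Lemma faces_fan_delta_maximal V :
  (forall s g, s \in D -> g \in s.1 -> conv V (lv g)) ->
  (forall n : lat, n != 0 -> conv V (lv n) ->
     exists2 s, s \in D & exists2 g, g \in s.1 & seteq (ray (lv g)) (ray (lv n))) ->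
  delta_maximal R V (faces_fan D).
Proof.
move=> hconv hrays; split; [exact: faces_fan_is_fan | exact: faces_fan_rays | |].
  case: hD => _ _ _ Dcover x; have [s hs hx] := Dcover x.
  by exists s.1 => //; apply/faces_fanP; exists s.
by move=> S hS; exists S; split => //; apply: faces_fan_lin_indep.
Qed.

End FacesFan.

Definition vcoord (v : lat) (s : cell) j := pairing (dual_basis s.1 j) (lv v).

(* The stellar subdivision at [v] of a cell [s] whose cone contains [v]: for
   each [j] with positive [v]-coordinate, the cone with the [j]-th generator
   replaced by [v].  Its linear function agrees with [m_s] on the kept
   generators and exceeds it by [e] at [v]. *)
Definition star_cell (v : lat) e (s : cell) j : cell :=
  (set_nth 0 s.1 j v, s.2 + (e / vcoord v s j) *: dual_basis s.1 j).

Definition star_cells v e (s : cell) : seq cell :=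
  if propb (cone s.1 (lv v))
  then [seq star_cell v e s j | j <- iota 0 (size s.1) & 0 < vcoord v s j]
  else [:: s].

Definition stellar v e (D : seq cell) : seq cell := flatten (map (star_cells v e) D).

Lemma stellarP v e D x : x \in stellar v e D <-> exists2 s, s \in D &
  ((~ cone s.1 (lv v) /\ x = s) \/
   (cone s.1 (lv v) /\ exists j, [/\ (j < size s.1)%N, 0 < vcoord v s j & x = star_cell v e s j])).
Proof.
rewrite /stellar; split=> [/flatten_mapP [s hs hx] | [s hs hx]]; last first.
  apply/flatten_mapP; exists s => //; rewrite /star_cells.
  case: (propbP (cone s.1 (lv v))) => hv; case: hx => [[//] _ -> | [//] _ [j [hj hc ->]]].
    by apply: map_f; rewrite mem_filter mem_iota add0n hc hj.
  exact: mem_head.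
exists s => //; move: hx; rewrite /star_cells.
case: (propbP (cone s.1 (lv v))) => hv.
  case/mapP => j; rewrite mem_filter mem_iota add0n => /andP [hc hj] ->.
  by right; split => //; exists j.
by rewrite inE => /eqP ->; left.
Qed.

Section StarCell.
Variables (v : lat) (e : R) (s : cell) (j : nat).
Hypotheses (hS : lin_indep s.1) (hj : (j < size s.1)%N) (hc : 0 < vcoord v s j).
Let nc := star_cell v e s j.

Lemma star_cell_nth l : nth 0 nc.1 l = if l == j then v else nth 0 s.1 l.
Proof. by rewrite /nc /star_cell /= nth_set_nth. Qed.

Lemma star_cell_size : size nc.1 = size s.1.
Proof. exact: size_set_nth_lt. Qed.

Lemma star_cell_pairing x :
  pairing nc.2 x = pairing s.2 x + e / vcoord v s j * pairing (dual_basis s.1 j) x.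
Proof. by rewrite /nc /star_cell /= pairingDl pairingZl. Qed.

Lemma star_cell_v : pairing nc.2 (lv v) = pairing s.2 (lv v) + e.
Proof. by rewrite star_cell_pairing -/(vcoord v s j) mulfVK // gt_eqF. Qed.

Lemma star_cell_other l : (l < size s.1)%N -> l != j ->
  pairing nc.2 (lv (nth 0 s.1 l)) = pairing s.2 (lv (nth 0 s.1 l)).
Proof.
move=> hl hlj; rewrite star_cell_pairing (dual_basisP hS) // eq_sym.
by rewrite (negbTE hlj) mulr0 addr0.
Qed.

Lemma star_cell_mem g : g \in nc.1 ->
  g = v \/ exists l, [/\ (l < size s.1)%N, l != j & g = nth 0 s.1 l].
Proof.
case/(nthP 0) => l; rewrite star_cell_size star_cell_nth => hl.
by case: eqP => [_ <- | /eqP hlj <-]; [left | right; exists l].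
Qed.

Lemma star_cell_mem_v : v \in nc.1.
Proof.
by apply/(nthP 0); exists j; rewrite ?star_cell_size // star_cell_nth eqxx.
Qed.

Lemma star_cell_lin_indep : lin_indep nc.1.
Proof.
apply/lin_indepE => d; rewrite /nc /star_cell /= lcomb_set_nth // => h0.
have hd := dual_basisP hS.
have hdj : d j = 0.
  have := congr1 (pairing (dual_basis s.1 j)) h0.
  rewrite pairing0r pairingDr dual_basis_coord // eqxx pairingZr -/(vcoord v s j) add0r.
  by move/eqP; rewrite mulf_eq0 (gt_eqF hc) orbF => /eqP.
have h1 : lcomb s.1 (fun l => if l == j then 0 else d l) = 0.
  by rewrite -[RHS]h0 hdj scale0r addr0.
move=> i; rewrite size_set_nth_lt // => hi.
have := (proj1 (lin_indepE _) hS) _ h1 i hi.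
by case: eqP => [-> _ | _ ->].
Qed.

Lemma star_cell_sub x : cone s.1 (lv v) -> cone nc.1 x -> cone s.1 x.
Proof.
move=> hv; apply: cone_gen_sub => g /star_cell_mem [-> // | [l [hl _ ->]]].
by apply: cone_mem; rewrite mem_nth.
Qed.

Lemma star_cell_face x : cone s.1 x -> pairing (dual_basis s.1 j) x = 0 -> cone nc.1 x.
Proof.
move=> hx h0; have [c0 ex] := cone_coords hS hx.
apply/coneE; exists (fun l => pairing (dual_basis s.1 l) x); split.
  by move=> i; rewrite star_cell_size; apply: c0.
rewrite /nc /star_cell /= lcomb_set_nth // h0 scale0r addr0 {1}ex.
by apply: eq_lcomb => i hi; case: eqP => // ->.
Qed.

End StarCell.

Definition small_step (D : seq cell) (v : lat) (e : R) : Prop :=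
  (forall s t, s \in D -> t \in D -> pairing s.2 (lv v) < pairing t.2 (lv v) ->
     pairing s.2 (lv v) + e < pairing t.2 (lv v)) /\
  (forall s t g j, s \in D -> t \in D -> g \in s.1 -> (j < size t.1)%N ->
     pairing s.2 (lv g) < pairing t.2 (lv g) ->
     pairing s.2 (lv g) <
       pairing t.2 (lv g) + e / vcoord v t j * pairing (dual_basis t.1 j) (lv g)).

Lemma exists_small_step D v : exists2 e, 0 < e & small_step D v e.
Proof.
pose gap (s t : cell) x := pairing t.2 x - pairing s.2 x.
pose LA : seq (R * R) := [seq (gap s t (lv v), -1) | s <- D, t <- D].
pose LB : seq (R * R) := [seq (gap st.1 st.2 (lv gj.1),
                 pairing (dual_basis st.2.1 gj.2) (lv gj.1) / vcoord v st.2 gj.2)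
           | st <- [seq (s, t) | s <- D, t <- D],
             gj <- [seq (g, j) | g <- st.1.1, j <- iota 0 (size st.2.1)]].
have [e he hle] := exists_small_pos (LA ++ LB).
exists e => //; split.
  move=> s t hs ht; rewrite -subr_gt0 => hgap.
  have := hle (gap s t (lv v), -1); rewrite mem_cat (allpairs_f _ hs ht).
  move=> /(_ isT hgap); rewrite /= /gap mulrN1 => h.
  by rewrite -subr_gt0 opprD addrA.
move=> s t g j hs ht hg hj; rewrite -subr_gt0 => hgap.
have hB : (gap s t (lv g), pairing (dual_basis t.1 j) (lv g) / vcoord v t j) \in LA ++ LB.
  rewrite mem_cat; apply/orP; right.
  apply/allpairsPdep; exists (s, t), (g, j); split => //.
    exact: (allpairs_f pair hs ht).
  by apply: (allpairs_f pair hg); rewrite mem_iota add0n.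
have := hle _ hB hgap; rewrite /= /gap => h.
by rewrite -subr_gt0 addrAC mulrAC -mulrA.
Qed.

Section Stellar.
Variables (D : seq cell) (v : lat) (e : R).
Hypotheses (hD : coherent D) (hv : lv v != 0) (he : 0 < e) (hsmall : small_step D v e).

Lemma exists_vcoord_gt0 s : s \in D -> cone s.1 (lv v) ->
  exists2 j, (j < size s.1)%N & 0 < vcoord v s j.
Proof.
case: hD => Dlin _ _ _ hs hcv; have [cnn ecv] := cone_coords (Dlin _ hs) hcv.
case: (propbP (exists2 j, (j < size s.1)%N & 0 < vcoord v s j)) => // hno.
exfalso; apply: (negP hv); apply/eqP.
rewrite ecv -(lcomb0 s.1); apply: eq_lcomb => i hi.
apply/eqP; rewrite eq_le (cnn i hi) andbT leNgt; apply/negP => hci.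
by apply: hno; exists i.
Qed.

Lemma stellar_gen_value x g : x \in stellar v e D -> g \in x.1 -> exists2 s, s \in D &
   (g = v /\ cone s.1 (lv v) /\ pairing x.2 (lv g) = pairing s.2 (lv v) + e) \/
   (g \in s.1 /\ pairing x.2 (lv g) = pairing s.2 (lv g)).
Proof.
case: hD => Dlin _ _ _.
move=> /stellarP [s hs [[_ ->] | [hcv [j [hj hc ->]]]]] hg; exists s => //; first by right.
case: (star_cell_mem hj hg) => [-> | [l [hl hlj ->]]].
  by left; split => //; split => //; apply: star_cell_v.
by right; split; [exact: mem_nth | exact: (star_cell_other v e (Dlin _ hs) hj hl hlj)].
Qed.

Lemma stellar_vs_unchanged x t g : x \in stellar v e D -> g \in x.1 -> t \in D ->
  ~ cone t.1 (lv v) ->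
  pairing x.2 (lv g) <= pairing t.2 (lv g) /\
  (pairing t.2 (lv g) = pairing x.2 (lv g) -> cone t.1 (lv g)).
Proof.
case: (hD) => _ Dle Deq _ hx hg ht hnt.
have [s hs [[-> [hcs ->]] | [hgs ->]]] := stellar_gen_value hx hg; last first.
  by split; [apply: Dle | apply: Deq].
have [k1 k2] := coherent_min hD hs ht hcs.
apply/lt_dominates/hsmall.1 => //.
by rewrite lt_def k1 andbT; apply/eqP => e'; exact: hnt (k2 e').
Qed.

Lemma stellar_vs_star x t j g : x \in stellar v e D -> g \in x.1 -> t \in D ->
  cone t.1 (lv v) -> (j < size t.1)%N -> 0 < vcoord v t j ->
  pairing x.2 (lv g) <= pairing (star_cell v e t j).2 (lv g) /\
  (pairing (star_cell v e t j).2 (lv g) = pairing x.2 (lv g) ->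
     cone (star_cell v e t j).1 (lv g)).
Proof.
case: (hD) => Dlin Dle Deq _ hx hg ht hct hj hc.
have [s hs [[-> [hcs ->]] | [hgs ->]]] := stellar_gen_value hx hg.
  rewrite star_cell_v // (coherent_agree hD hs ht hcs hct); split => // _.
  exact/cone_mem/(star_cell_mem_v v e hj).
rewrite star_cell_pairing; set p := pairing (dual_basis t.1 j) (lv g).
have := Dle _ _ _ hs ht hgs; rewrite le_eqVlt => /orP [/eqP e0 | hlt].
  have hct' := Deq _ _ _ hs ht hgs (esym e0).
  have hp : 0 <= p by apply: ((cone_coords (Dlin _ ht) hct').1 j hj).
  have hp2 : 0 <= e / vcoord v t j * p by rewrite mulr_ge0 // divr_ge0 // ltW.
  rewrite -e0; split; first by rewrite lerDl.
  move/eqP; rewrite addrC -subr_eq0 addrK !mulf_eq0 invr_eq0 (gt_eqF he) (gt_eqF hc) /=.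
  by move=> /eqP p0; exact: (star_cell_face v e (Dlin _ ht) hj hct' p0).
exact/lt_dominates/hsmall.2.
Qed.

Lemma stellar_compare x y g : x \in stellar v e D -> y \in stellar v e D -> g \in x.1 ->
  pairing x.2 (lv g) <= pairing y.2 (lv g) /\
  (pairing y.2 (lv g) = pairing x.2 (lv g) -> cone y.1 (lv g)).
Proof.
move=> hx /stellarP [t ht [[hnt ->] | [hct [j [hj hc ->]]]]] hg.
  exact: stellar_vs_unchanged.
exact: stellar_vs_star.
Qed.

(* Choosing [j] minimising [x_j / v_j] over the positive [v_j] keeps all the
   coefficients of [x - (x_j / v_j) v] nonnegative. *)
Lemma stellar_cover x : exists2 y, y \in stellar v e D & cone y.1 x.
Proof.
case: (hD) => Dlin _ _ Dcover; have [s hs hx] := Dcover x.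
case: (excluded_middle_informative (cone s.1 (lv v))) => hcv; last first.
  by exists s => //; apply/stellarP; exists s => //; left.
have [cnn ecv] := cone_coords (Dlin _ hs) hcv.
have [ann ex] := cone_coords (Dlin _ hs) hx.
pose I := [seq l <- iota 0 (size s.1) | 0 < vcoord v s l].
have hI : I != [::].
  have [j0 hj0 hc0] := exists_vcoord_gt0 hs hcv.
  apply/eqP => hI0; have : j0 \in I by rewrite mem_filter mem_iota add0n hc0 hj0.
  by rewrite hI0.
pose a i := pairing (dual_basis s.1 i) x.
have [j hjI hmin] := exists_seq_argmin (fun l => a l / vcoord v s l) hI.
move: hjI; rewrite mem_filter mem_iota add0n => /andP [hc hj].
exists (star_cell v e s j); first by apply/stellarP; exists s => //; right; split => //; exists j.
pose r := a j / vcoord v s j.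
have r0 : 0 <= r by rewrite divr_ge0 ?ann // ltW.
apply/coneE; exists (fun l => if l == j then r else a l - r * vcoord v s l); split.
  move=> i; rewrite star_cell_size // => hi; case: eqP => // /eqP hij.
  case: (ltrP 0 (vcoord v s i)) => hci.
    rewrite subr_ge0 -ler_pdivlMr //; apply: hmin.
    by rewrite mem_filter mem_iota add0n hci hi.
  have -> : vcoord v s i = 0 by apply/eqP; rewrite eq_le hci cnn.
  by rewrite mulr0 subr0 ann.
rewrite /star_cell /= lcomb_set_nth // eqxx {1}ex.
rewrite [in r *: _]ecv lcombZ lcombD; apply: eq_lcomb => i hi.
case: eqP => [-> | _]; first by rewrite add0r /r mulfVK // gt_eqF.
by rewrite subrK.
Qed.

Lemma stellar_coherent : coherent (stellar v e D).
Proof.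
case: (hD) => Dlin _ _ _; split.
- move=> x /stellarP [s hs [[_ ->] | [hcv [j [hj hc ->]]]]]; first exact: Dlin.
  exact: star_cell_lin_indep (Dlin _ hs) hj hc.
- by move=> x y g hx hy hg; apply: (stellar_compare hx hy hg).1.
- by move=> x y g hx hy hg; apply: (stellar_compare hx hy hg).2.
- exact: stellar_cover.
Qed.

Lemma stellar_sub x : x \in stellar v e D -> exists2 s, s \in D &
  vsubset (cone x.1) (cone s.1) /\ (forall g, g \in x.1 -> g \in s.1 \/ g = v).
Proof.
move=> /stellarP [s hs [[_ ->] | [hcv [j [hj hc ->]]]]].
  by exists s => //; split => // g; left.
exists s => //; split; first by move=> y; apply: (star_cell_sub hj hcv).
move=> g /(star_cell_mem hj) [-> | [l [hl _ ->]]]; first by right.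
by left; rewrite mem_nth.
Qed.

Lemma stellar_mem_v : exists2 x, x \in stellar v e D & v \in x.1.
Proof.
case: hD => _ _ _ Dcover.
have [s hs hcv] := Dcover (lv v); have [j hj hc] := exists_vcoord_gt0 hs hcv.
exists (star_cell v e s j); last exact: (star_cell_mem_v v e hj).
by apply/stellarP; exists s => //; right; split => //; exists j.
Qed.

(* A generator [g] of a cell containing [v] survives in some star cell, unless
   [v] is a positive multiple of [g], in which case [v] spans the same ray. *)
Lemma stellar_keeps_rays s g : s \in D -> g \in s.1 ->
  exists2 x, x \in stellar v e D & exists2 g', g' \in x.1 & seteq (ray (lv g')) (ray (lv g)).
Proof.
case: (hD) => Dlin _ _ _ hs hg.
case: (excluded_middle_informative (cone s.1 (lv v))) => hcv; last first.
  by exists s; [apply/stellarP; exists s => //; left | exists g].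
have [cnn ecv] := cone_coords (Dlin _ hs) hcv.
case/(nthP 0): hg => l hl <-.
case: (boolP (has (fun j => (j != l) && (0 < vcoord v s j)) (iota 0 (size s.1)))).
  case/hasP => j; rewrite mem_iota add0n => hj /andP [hjl hc].
  exists (star_cell v e s j); first by apply/stellarP; exists s => //; right; split => //; exists j.
  exists (nth 0 s.1 l) => //.
  by apply/(nthP 0); exists l; [rewrite star_cell_size | rewrite star_cell_nth eq_sym (negbTE hjl)].
move/hasPn => hno.
have hz j : (j < size s.1)%N -> j != l -> vcoord v s j = 0.
  move=> hj hjl; have := hno j; rewrite mem_iota add0n hj hjl /= => /(_ isT) hn.
  by apply/eqP; rewrite eq_le cnn // andbT leNgt.
have ev : lv v = vcoord v s l *: lv (nth 0 s.1 l).
  rewrite {1}ecv /lcomb (bigD1 (Ordinal hl)) //= big1 ?addr0 // => i hi.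
  by rewrite -/(vcoord v s i) hz ?scale0r.
have hcl : 0 < vcoord v s l.
  by rewrite lt_def cnn // andbT; apply: contra hv => /eqP c0; rewrite ev c0 scale0r.
exists (star_cell v e s l); first by apply/stellarP; exists s => //; right; split => //; exists l.
by exists v; [exact: (star_cell_mem_v v e hl) | rewrite ev; apply: rayZ].
Qed.

End Stellar.

Lemma exists_maximal_cone_above (F : fanT) S : S \in F ->
  exists S', maximal_cone R F S' /\ vsubset (cone S) (cone S').
Proof.
pose cnt T := count (fun U => propb (vsubset (cone U) (cone T))) F.
suff ind n T : (size F - cnt T < n)%N -> T \in F -> vsubset (cone S) (cone T) ->
    exists S', maximal_cone R F S' /\ vsubset (cone S) (cone S').
  by move=> hS; apply: (ind (size F).+1 S) => //; rewrite ltnS leq_subr.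
elim: n T => [|n IH] T; first by rewrite ltn0.
move=> hlt hT hST.
case: (excluded_middle_informative (maximal_cone R F T)) => hmax; first by exists T.
have [T' [hT' hTT' hnot]] : exists T',
    [/\ T' \in F, vsubset (cone T) (cone T') & ~ vsubset (cone T') (cone T)].
  apply: NNPP => hno; apply: hmax; split => // T' hT' hsub.
  by apply: NNPP => hn; apply: hno; exists T'.
apply: (IH T') => //; last by move=> x /hST /hTT'.
have h1 : (cnt T < cnt T')%N.
  apply: sub_count_lt => [U /propbP hU|]; first by apply/propbP => x /hU /hTT'.
  by exists T'; split => //; apply/propbP.
have h2 : (cnt T' <= size F)%N := count_size _ _.
lia.
Qed.

Section InitialCells.
Variables (V1 : seq lat) (F1 : fanT) (phi : vec -> R).
Hypothesis hF1 : delta_maximal R V1 F1.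
Hypothesis hphi : forall S, maximal_cone R F1 S -> exists m : vec, forall u,
  phi u <= pairing m u /\ (phi u = pairing m u <-> cone S u).

Definition represents (S : seq lat) (d : cell) :=
  [/\ lin_indep d.1, seteq (cone d.1) (cone S),
      forall g, g \in d.1 -> conv V1 (lv g)
    & forall u, phi u <= pairing d.2 u /\ (phi u = pairing d.2 u <-> cone S u)].

(* Each generator of a maximal cone spans a ray of [F1], hence is a positive
   multiple of a lattice point of [conv V1]. *)
Lemma maximal_cone_represented S : maximal_cone R F1 S -> exists d, represents S d.
Proof.
move=> hmax; have hS := hmax.1.
case: hF1 => [[_ Fface _] [Frays _] _ Fsimp].
have [m hm] := hphi hmax.
have [T [hT hST]] := Fsimp S hS.
have hpts i : (i < size T)%N -> exists p : lat * R,
    [/\ 0 < p.2, lv (nth 0 T i) = p.2 *: lv p.1 & conv V1 (lv p.1)].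
  move=> hi; set t := nth 0 T i.
  have htT : t \in T by rewrite mem_nth.
  have [T'' hT'' hr] := Fface S _ hS (ray_is_face hT htT hST).
  have htnz : lv t != 0 := lin_indep_neq0 hT htT.
  have [n [hn hcn hrn]] := Frays T'' (lv t) hT'' htnz (fun x => iff_sym (hr x)).
  have [lam [lam0 elam]] : ray (lv n) (lv t) by apply/hrn/hr; exists 1; rewrite scale1r.
  exists (n, lam); split => //=.
  by rewrite lt_def lam0 andbT; apply: contra htnz => /eqP l0; rewrite elam l0 scale0r.
have [l' [hsz hl']] := @exists_nth_choice lat (lat * R)%type 0 (0, 0) T
  (fun t (p : lat * R) => [/\ 0 < p.2, lv t = p.2 *: lv p.1 & conv V1 (lv p.1)]) hpts.
pose T' := map fst l'.
have hs' : size T' = size T by rewrite size_map hsz.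
have hnth i : (i < size T)%N -> nth 0 T' i = (nth (0, 0) l' i).1.
  by move=> hi; rewrite (nth_map (0, 0)) // hsz.
pose lam i := (nth ((0 : lat), (0 : R)) l' i).2.
have hlam i : (i < size T)%N -> 0 < lam i /\ lv (nth 0 T i) = lam i *: lv (nth 0 T' i).
  by move=> hi; case: (hl' i hi) => h1 h2 _; split => //; rewrite hnth.
have [hcone hli] := cone_rescale hs' hlam.
exists (T', m); split => //=.
- exact: hli.
- by move=> x; rewrite -hcone hST.
- move=> g /(nthP 0) [i]; rewrite size_map hsz => hi <-.
  by rewrite hnth //; case: (hl' i hi).
Qed.

(* Both coherence conditions come from [phi <= m_t], with equality exactly on
   the cone of [t], together with [phi = m_s] on the cone of [s]. *)
Lemma coherent_of_projective : exists D, [/\ coherent D,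
  forall s g, s \in D -> g \in s.1 -> conv V1 (lv g)
  & forall s, s \in D -> exists2 S1, S1 \in F1 & vsubset (cone s.1) (cone S1)].
Proof.
case: hF1 => _ _ Fcomplete _.
pose Mx := [seq S <- F1 | propb (maximal_cone R F1 S)].
have hQ S : S \in Mx -> exists d, represents S d.
  by rewrite mem_filter => /andP [/propbP hmax _]; exact: maximal_cone_represented.
have [D [hD1 hD2]] := exists_seq_choice hQ.
have phi_eq s S u : represents S s -> cone s.1 u -> phi u = pairing s.2 u.
  by case=> _ hs1 _ hs2 /hs1; apply: (proj2 (hs2 u).2).
exists D; split.
- split.
  + by move=> s /hD1 [S _ []].
  + move=> s t g /hD1 [S _ hs] /hD1 [S' _ [_ _ _ ht2]] hg.
    by rewrite -(phi_eq s S _ hs (cone_mem hg)); apply: (ht2 _).1.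
  + move=> s t g /hD1 [S _ hs] /hD1 [S' _ [_ ht1 _ ht2]] hg e.
    by apply/ht1/(ht2 _).2; rewrite e (phi_eq s S _ hs (cone_mem hg)).
  + move=> x; have [S hS hx] := Fcomplete x.
    have [S' [hmax hsub']] := exists_maximal_cone_above hS.
    have hS' : S' \in Mx by rewrite mem_filter (introT (propbP _) hmax) hmax.1.
    have [d hd [_ hd1 _ _]] := hD2 S' hS'.
    by exists d => //; apply/hd1/hsub'.
- by move=> s g /hD1 [S _ [_ _ hs3 _]] hg; exact: hs3.
- move=> s /hD1 [S hS [_ hs1 _ _]]; exists S; last by move=> x /hs1.
  by move: hS; rewrite mem_filter => /andP [].
Qed.

End InitialCells.

Lemma conv_lattice_bound V : exists M : nat, forall n : lat, conv V (lv n) ->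
  forall k, (- M%:Z <= n 0 k)%R /\ (n 0 k <= M%:Z)%R.
Proof.
pose M := (\max_(w <- V) \max_(k < 4) `|w 0%R k|)%N.
exists M => n [c [c0 [c1 hx]]] k.
have hw (i : nat) : (`|(nth 0%R V i) 0%R k| <= M)%N.
  case: (ltnP i (size V)) => hi; last by rewrite nth_default // mxE.
  apply: leq_trans (leq_bigmax_seq _ (mem_nth 0 hi) isT).
  exact: (@leq_bigmax _ (fun k0 : 'I_4 => `|(nth 0%R V i) 0%R k0|)%N k).
have hn : ((n 0 k)%:~R : R) = \sum_i c i * ((nth 0 V i) 0 k)%:~R.
  have := congr1 (fun x : vec => x 0 k) hx; rewrite /= mxE summxE => ->.
  by apply: eq_bigr => i _; rewrite !mxE.
have conv_const (z : int) : \sum_i c i * (z%:~R : R) = z%:~R.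
  by rewrite -big_distrl /= c1 mul1r.
split; rewrite -(ler_int R) hn.
  rewrite -conv_const; apply: ler_sum => i _; apply: ler_wpM2l => //.
  by rewrite ler_int; have := hw i; lia.
rewrite -conv_const; apply: ler_sum => i _; apply: ler_wpM2l => //.
by rewrite ler_int; have := hw i; lia.
Qed.

Lemma lattice_points_finite V : exists L : seq lat,
  forall n, n \in L <-> (n != 0 /\ conv V (lv n)).
Proof.
have [M hM] := conv_lattice_bound V.
pose box := map (map_mx (fun k : 'I_(2 * M).+1 => k%:Z - M%:Z)) (enum 'rV['I_(2 * M).+1]_4).
exists [seq n <- box | propb (n != 0 /\ conv V (lv n))] => n.
rewrite mem_filter; split; first by case/andP => /propbP.
move=> h; rewrite (introT (propbP _) h) /=; have [_ hc] := h.
apply/mapP; exists (\row_k inord (absz (n 0 k + M%:Z))); first by rewrite mem_enum.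
apply/rowP => k; have [lo hi] := hM n hc k.
by rewrite !mxE inordK; move: (n 0 k) lo hi => z lo hi; lia.
Qed.

Lemma stellar_iterate V (F1 : fanT) (L : seq lat) D : coherent D ->
  (forall s g, s \in D -> g \in s.1 -> conv V (lv g)) ->
  (forall s, s \in D -> exists2 S1, S1 \in F1 & vsubset (cone s.1) (cone S1)) ->
  (forall n, n \in L -> n != 0 /\ conv V (lv n)) ->
  exists D', [/\ coherent D', forall s g, s \in D' -> g \in s.1 -> conv V (lv g),
    forall s, s \in D' -> exists2 S1, S1 \in F1 & vsubset (cone s.1) (cone S1) &
    forall n, n \in L -> exists2 s, s \in D' &
      exists2 g, g \in s.1 & seteq (ray (lv g)) (ray (lv n))].
Proof.
move=> hD hgens href; elim: L => [|v L IH] hL; first by exists D; split.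
have [D1 [hD1 gens1 ref1 rays1]] := IH (fun n hn => hL n (@mem_behead _ (v :: L) n hn)).
have [hv0 hvc] := hL v (mem_head _ _).
have hv : lv v != 0 by apply: contra hv0 => /eqP /lat2vec_eq0 ->.
have [e he hsmall] := exists_small_step D1 v.
exists (stellar v e D1); split.
- exact: stellar_coherent.
- move=> x g hx hg; have [s hs [_ hgs]] := stellar_sub hx.
  by case: (hgs g hg) => [hg' | ->]; [exact: gens1 hs hg' | exact: hvc].
- move=> x hx; have [s hs [hsub _]] := stellar_sub hx.
  have [S1 hS1 hsub'] := ref1 s hs.
  by exists S1 => // y /hsub /hsub'.
- move=> n; rewrite in_cons => /orP [/eqP -> | hn].
    by have [x0 hx0 hvx0] := stellar_mem_v e hD1 hv; exists x0 => //; exists v.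
  have [s hs [g hg hrg]] := rays1 n hn.
  have [x hx [g' hg' hr']] := stellar_keeps_rays e hD1 hv hs hg.
  by exists x => //; exists g' => // y; rewrite hr'; exact: hrg.
Qed.

End Refinement.

Theorem lemma6p1 (R : realFieldType) (V1 V2 : seq (lat))
  (hr1 : reflexive_polytope R V1) (hr2 : reflexive_polytope R V2)
  (hsub : vsubset R (conv R V1) (conv R V2))
  (F1 : fanT) (hF1 : delta_maximal R V1 F1) (hp1 : projective R F1) :
  exists F2 : fanT, [/\ delta_maximal R V2 F2, projective R F2 & refines R F2 F1].
Proof.
case: hp1 => phi [_ hphi].
have [D0 [hD0 gens0 ref0]] := coherent_of_projective hF1 hphi.
have [L hL] := lattice_points_finite R V2.
have [D [hD gensD refD raysD]] := stellar_iterate (L := L) hD0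
  (fun s g hs hg => hsub _ (gens0 s g hs hg)) ref0 (fun n hn => (hL n).1 hn).
exists (faces_fan D); split.
- by apply: faces_fan_delta_maximal => // n hn hc; apply/raysD/hL.
- exact: faces_fan_projective.
- exact: faces_fan_refines.
Qed.
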